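(* Every pairwise balanced lobster has a complete $\alpha$-labeling.
   Context: For a graph $G=(V,E)$ with $m$ edges, an $\alpha$-labeling with critical number $k$ is an injective $f:V\to\{0,\ldots,m\}$ with distinct edge labels $|f(u)-f(v)|$ such that every edge $uv$ satisfies $f(u)\le k<f(v)$ or $f(v)\le k<f(u)$; it is complete if $f$ is bijective. A lobster is a tree whose base (delete all degree-one vertices) is a caterpillar (a tree whose base is a path). A lobster $L$ is described by a spine, a path $(v_1,\ldots,v_r)$, and lobes $F_i$ at $v_i$ (pairwise vertex-disjoint trees meeting the spine only in $v_i$, $L$ being the union of spine and lobes), each lobe $F_i$ consisting of $v_i$, vertices adjacent to $v_i$, and further leaves attached to those vertices; a neighbour of $v_i$ in $F_i$ with no further leaves is a pendant vertex at $v_i$, and a neighbour $u$ of $v_i$ together with its $\ge1$ further leaves is a (non-pendant) branch. A two-spinal-vertex tree $G$ consisting of adjacent vertices $w_1,w_2$, where $w_1$ has $s_1\ge0$ pendant neighbours and non-pendant branches centered at $u_{11},\ldots,u_{1r}$ with $u_{1i}$ having $x_i\ge1$ leaves, and $w_2$ has $s_2\ge0$ pendant neighbours and non-pendant branches centered at $u_{21},\ldots,u_{2s}$ with $u_{2j}$ having $y_j\ge1$ leaves, is balanced if $r=s$ and (when $r>0$) for all $i=1,\ldots,r$: $x_i=y_{r-\frac{i-1}{2}}$, $y_i=x_{r-\frac{i-1}{2}}$ for odd $i$, and $x_i=x_{i/2}$, $y_i=y_{i/2}$ for even $i$. A lobster $L$ is pairwise balanced if $r$ is even and, for each odd $i\in\{1,\ldots,r-1\}$,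 the subtree consisting of $v_i,v_{i+1}$ together with the lobes $F_i,F_{i+1}$ is balanced (for a suitable indexing of its branches). *)

From mathcomp Require Import all_boot.
Set Implicit Arguments.
Unset Strict Implicit.
Unset Printing Implicit Defensive.

(* A finite simple graph: vertex type T : finType, adjacency e : rel T,
   assumed symmetric and irreflexive in the theorem. *)

Definition edges (T : finType) (e : rel T) : {set {set T}} :=
  [set [set p.1; p.2] | p in [set p : T * T | e p.1 p.2]].

Definition nedges (T : finType) (e : rel T) : nat := #|edges e|.

Definition absdiff (a b : nat) : nat := (a - b) + (b - a).

Definition alpha_labeling (T : finType) (e : rel T) (f : T -> nat) (k : nat) : Prop :=
  injective f /\
  (forall v, f v <= nedges e) /\
  (forall u v u' v', e u v -> e u' v' ->
     absdiff (f u) (f v) = absdiff (f u') (f v') ->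
     (u = u' /\ v = v') \/ (u = v' /\ v = u')) /\
  (forall u v, e u v -> (f u <= k < f v) \/ (f v <= k < f u)).

Definition complete_alpha_labeling (T : finType) (e : rel T) (f : T -> nat) (k : nat) : Prop :=
  alpha_labeling e f k /\ (forall n, n <= nedges e -> exists v, f v = n).

(* Spine (v_1,...,v_r) is represented 0-indexed as sp 0, ..., sp (r-1).
   Every non-spine vertex x has a "parent" par x: either par x is a spine
   vertex v_i (x is a neighbour of v_i in the lobe F_i), or par x is a
   non-spine vertex whose parent is a spine vertex (x is a further leaf
   attached to a neighbour of v_i). *)

Definition is_spine (T : finType) (r : nat) (sp : nat -> T) (x : T) : bool :=
  [exists i : 'I_r, sp i == x].

Definition lobster_description (T : finType) (e : rel T) (r : nat)
    (sp : nat -> T) (par : T -> T) : Prop :=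
  0 < r /\
  (forall i j, i < r -> j < r -> sp i = sp j -> i = j) /\
  (forall x, ~~ is_spine r sp x ->
     is_spine r sp (par x) \/
     (~~ is_spine r sp (par x) /\ is_spine r sp (par (par x)))) /\
  (forall x y, e x y <->
     ((exists i, i.+1 < r /\
         ((x = sp i /\ y = sp i.+1) \/ (y = sp i /\ x = sp i.+1))) \/
      (~~ is_spine r sp x /\ y = par x) \/
      (~~ is_spine r sp y /\ x = par y))).

Definition nleaves (T : finType) (r : nat) (sp : nat -> T) (par : T -> T) (u : T) : nat :=
  #|[set z | ~~ is_spine r sp z & par z == u]|.

Definition is_branch (T : finType) (r : nat) (sp : nat -> T) (par : T -> T) (w u : T) : bool :=
  [&& ~~ is_spine r sp u, par u == w & 0 < nleaves r sp par u].

(* The two-spinal-vertex tree on w1, w2 (with their lobes) is balanced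
   for a suitable indexing of its branches: the branches at w1 are listed
   (without repetition) as xs = [u_11; ...; u_1n], those at w2 as
   ys = [u_21; ...; u_2n] (same number n), and with x_i, y_i the leaf
   counts (1-indexed) the balance conditions hold. *)
Definition balanced_pair (T : finType) (r : nat) (sp : nat -> T) (par : T -> T)
    (w1 w2 : T) : Prop :=
  exists xs ys : seq T,
    uniq xs /\ uniq ys /\
        (forall u, (u \in xs) = is_branch r sp par w1 u) /\
        (forall u, (u \in ys) = is_branch r sp par w2 u) /\
        size xs = size ys /\
        (let n := size xs in
        let X := fun i => nleaves r sp par (nth w1 xs i.-1) in
        let Y := fun i => nleaves r sp par (nth w2 ys i.-1) in
        forall i, 1 <= i <= n ->
          if odd i then X i = Y (n - (i.-1)./2) /\ Y i = X (n - (i.-1)./2)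
          else X i = X (i./2) /\ Y i = Y (i./2)).

(* Pairwise balanced lobster: has a spine/lobe description with r even such
   that for each odd i in {1,...,r-1} (0-indexed: even j with j+1 < r) the
   pair v_i, v_{i+1} with lobes F_i, F_{i+1} is balanced. *)
Definition pairwise_balanced_lobster (T : finType) (e : rel T) : Prop :=
  exists (r : nat) (sp : nat -> T) (par : T -> T),
    lobster_description e r sp par /\ ~~ odd r /\
    (forall j, j.+1 < r -> ~~ odd j -> balanced_pair r sp par (sp j) (sp j.+1)).

From mathcomp Require Import all_boot zify.
From Stdlib Require Import IndefiniteDescription.
Set Implicit Arguments.
Unset Strict Implicit.
Unset Printing Implicit Defensive.

(* Split the spine v_0 ... v_{r-1} into the q = r/2 pairs (v_{2J}, v_{2J+1});
   each pair with its lobes is a balanced two-spinal-vertex tree, bipartite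
   with colour classes A_J (containing v_{2J}) and B_J.  The labels are dealt
   out to A_0, ..., A_{q-1} and then to B_{q-1}, ..., B_0, so every edge joins
   the initial segment to the final one and the critical number is
   |A_0| + ... + |A_{q-1}| - 1.  Inside a class the hub comes first, then the
   leaves of the branches in blocks, each block closed by a branch centre, then
   the pendants.  The edges inside pair J then have differences filling an
   interval that sits just above the difference of the spine edge from pair J
   to pair J + 1; the balance conditions are what make the differences inside
   a pair distinct, by matching the leaf edges at branch t with leaves of
   branch 2t or 2(n - t) + 1. *)

Inductive slot := Hub | Centre of nat | Leaf of nat & nat | Pendant of nat.

Section SideLayout.
Variables (n : nat) (F : nat -> nat) (s : nat).

Definition tail t := \sum_(t <= i < n.+1) (F i).+1.

Lemma tail_step t : t <= n -> tail t = tail t.+1 + (F t).+1.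
Proof. by move=> Ht; rewrite /tail big_ltn // addnC. Qed.

Lemma tail_end t : n < t -> tail t = 0.
Proof. by move=> Ht; rewrite /tail big_geq. Qed.

Lemma tail_mono t t' : t <= t' -> tail t' <= tail t.
Proof.
move=> le_tt'; case: (leqP t' n.+1) => [le_t'n | lt_nt']; last by rewrite (tail_end (ltnW lt_nt')).
by rewrite /tail (big_cat_nat le_tt' le_t'n) leq_addl.
Qed.

Lemma tail_ltS t : t <= n -> tail t.+1 < tail t.
Proof. by move=> le_tn; rewrite [X in _ < X]tail_step // addnS ltnS leq_addr. Qed.

Lemma tail_block_inj t t' p :
  tail t.+1 < p <= tail t -> tail t'.+1 < p <= tail t' -> t = t'.
Proof.
move=> Hp Hp'; case: (ltngtP t t') => // lt.
- by have := tail_mono lt; lia.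
- by have := tail_mono lt; lia.
Qed.

(* Positions inside a colour class: the hub at 0; then, for t = n, ..., 1, a
   block of F t + 1 positions holding the F t leaves of branch t followed by
   the centre of branch n + 1 - t; then the s pendants. *)
Definition slot_valid k :=
  match k with
  | Hub => true
  | Centre t => 0 < t <= n
  | Leaf t c => (0 < t <= n) && (c < F t)
  | Pendant c => c < s
  end.

Definition slot_pos k :=
  match k with
  | Hub => 0
  | Centre t => tail (n.+1 - t)
  | Leaf t c => tail t.+1 + c.+1
  | Pendant c => (tail 1).+1 + c
  end.

Definition side_size := (tail 1).+1 + s.

Lemma slot_pos_lt k : slot_valid k -> slot_pos k < side_size.
Proof.
rewrite /side_size; case: k => [|t|t c|c] //=.
- by move=> Ht; have := @tail_mono 1 (n.+1 - t) ltac:(lia); lia.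
- move=> /andP [Ht Hc]; have := @tail_mono 1 t ltac:(lia).
  by rewrite (tail_step (t := t)); lia.
- lia.
Qed.

Lemma slot_pos_gt0 k : slot_valid k -> k <> Hub -> 0 < slot_pos k.
Proof.
case: k => [|t|t c|c] //= Ht _; last lia.
by have := @tail_ltS (n.+1 - t) ltac:(lia); lia.
Qed.

Lemma slot_pos_inj k k' : slot_valid k -> slot_valid k' -> slot_pos k = slot_pos k' -> k = k'.
Proof.
have le1 t : 0 < t -> tail t <= tail 1 by apply: tail_mono.
have leaf_lt t c : t <= n -> c < F t -> tail t.+1 + c.+1 < tail t.
  by move=> Ht Hc; rewrite (tail_step Ht); lia.
case: k => [|t|t c|c]; case: k' => [|t'|t' c'|c'] /= Hk Hk' E //;
  try (move: Hk => /andP [Ht Hc]); try (move: Hk' => /andP [Ht' Hc']).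
- by have := @tail_ltS (n.+1 - t') ltac:(lia); lia.
- lia.
- by have := @tail_ltS (n.+1 - t) ltac:(lia); lia.
- have := @tail_ltS (n.+1 - t) ltac:(lia); have := @tail_ltS (n.+1 - t') ltac:(lia) => lt' lt.
  have := @tail_block_inj (n.+1 - t) (n.+1 - t') (tail (n.+1 - t)) ltac:(lia) ltac:(lia).
  by move=> ?; congr Centre; lia.
- have := @tail_ltS (n.+1 - t) ltac:(lia); have := leaf_lt t' c' ltac:(lia) Hc' => lt' lt.
  have := @tail_block_inj (n.+1 - t) t' (tail (n.+1 - t)) ltac:(lia) ltac:(lia).
  by move=> Et; subst t'; lia.
- by have := le1 (n.+1 - t) ltac:(lia); lia.
- lia.
- have := @tail_ltS (n.+1 - t') ltac:(lia); have := leaf_lt t c ltac:(lia) Hc => lt lt'.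
  have := @tail_block_inj t (n.+1 - t') (tail (n.+1 - t')) ltac:(lia) ltac:(lia).
  by move=> Et; subst t; lia.
- have := leaf_lt t c ltac:(lia) Hc; have := leaf_lt t' c' ltac:(lia) Hc' => lt' lt.
  have := @tail_block_inj t t' (tail t.+1 + c.+1) ltac:(lia) ltac:(lia).
  by move=> ?; subst t'; congr Leaf; lia.
- by have := leaf_lt t c ltac:(lia) Hc; have := le1 t; lia.
- by have := le1 (n.+1 - t') ltac:(lia); lia.
- by have := leaf_lt t' c' ltac:(lia) Hc'; have := le1 t'; lia.
- by congr Pendant; lia.
Qed.

Lemma tail_block_exists t0 p : 0 < p <= tail t0 -> exists2 t, t0 <= t <= n & tail t.+1 < p <= tail t.
Proof.
move=> Hp; move: {2}(n.+1 - t0) (erefl (n.+1 - t0)) => d.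
elim: d t0 Hp => [|d IH] t0 Hp Hd; first by rewrite tail_end in Hp; lia.
case: (leqP p (tail t0.+1)) => Hp'; last by exists t0; lia.
by have [t Ht Hb] := IH t0.+1 ltac:(lia) ltac:(lia); exists t => //; lia.
Qed.

Lemma slot_pos_surj p : p < side_size -> exists2 k, slot_valid k & slot_pos k = p.
Proof.
rewrite /side_size => Hp; case: (posnP p) => [->|p_gt0]; first by exists Hub.
case: (leqP p (tail 1)) => Hp1; last by exists (Pendant (p - (tail 1).+1)) => /=; lia.
have [t Ht /andP [lo_t hi_t]] := @tail_block_exists 1 p ltac:(lia).
case: (eqVneq p (tail t)) => [->|ne].
  by exists (Centre (n.+1 - t)) => /=; [lia | congr tail; lia].
exists (Leaf t (p - (tail t.+1).+1)) => /=; last lia.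
have := tail_step (t := t) ltac:(lia); move: ne => /eqP ne; rewrite Ht /=; lia.
Qed.
End SideLayout.

Definition balanced (n : nat) (X Y : nat -> nat) :=
  forall i, 0 < i <= n ->
    if odd i then X i = Y (n - i./2) /\ Y i = X (n - i./2)
    else X i = X i./2 /\ Y i = Y i./2.

Lemma balanced_sym n X Y : balanced n X Y -> balanced n Y X.
Proof. by move=> bal i /bal; case: ifP => _ [-> ->]. Qed.

Section Balanced.
Variables (n : nat) (X Y : nat -> nat).
Hypothesis bal : balanced n X Y.

Lemma balanced_even t : 0 < t.*2 <= n -> X t.*2 = X t /\ Y t.*2 = Y t.
Proof. by move=> /bal; rewrite odd_double half_double. Qed.

Lemma balanced_odd t : t.*2 < n -> X t.*2.+1 = Y (n - t) /\ Y t.*2.+1 = X (n - t).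
Proof.
move=> Ht; have := bal (i := t.*2.+1) ltac:(lia).
by rewrite /= odd_double uphalf_double.
Qed.

Lemma tail_double t : t.*2 <= n -> tail n X t.+1 = tail n X t.*2.+1 + tail n Y (n.+1 - t).
Proof.
elim: t => [|t IH] Ht; first by rewrite double0 subn0 (@tail_end n Y n.+1) ?addn0.
have [even_leaf _] := balanced_even (t := t.+1) ltac:(lia).
have [odd_leaf _] := balanced_odd (t := t) ltac:(lia).
rewrite doubleS in even_leaf *.
have := IH ltac:(lia); rewrite (_ : n.+1 - t = (n - t).+1); last lia.
rewrite (_ : n.+1 - t.+1 = n - t); last lia.
rewrite (@tail_step n X t.+1) ?(@tail_step n X t.*2.+1) ?(@tail_step n X t.*2.+2)
        ?(@tail_step n Y (n - t)); lia.
Qed.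

Lemma tail_double_odd u : u.*2 < n -> tail n Y u.+1 = tail n X (n - u) + tail n Y u.*2.+2.
Proof.
elim: u => [|u IH] Hu.
  have [_ first_leaf] := balanced_odd (t := 0) Hu.
  rewrite double0 subn0 in first_leaf *.
  by rewrite (@tail_step n Y 1) ?(@tail_step n X n) ?(@tail_end n X n.+1); lia.
have [_ even_leaf] := balanced_even (t := u.+1) ltac:(lia).
have [_ odd_leaf] := balanced_odd (t := u.+1) ltac:(lia).
rewrite doubleS in even_leaf odd_leaf *.
have := IH ltac:(lia); rewrite (_ : n - u = (n - u.+1).+1); last lia.
rewrite (@tail_step n Y u.+1) ?(@tail_step n Y u.*2.+2) ?(@tail_step n Y u.*2.+3)
        ?(@tail_step n X (n - u.+1)); lia.
Qed.
End Balanced.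

Section PairTree.
Variables (n : nat) (X Y : nat -> nat) (s1 s2 : nat).
Hypothesis bal : balanced n X Y.

Definition posA := slot_pos n X.
Definition posB := slot_pos n Y.
Definition validA := slot_valid n X s2.
Definition validB := slot_valid n Y s1.

Inductive pair_edge : slot -> slot -> Prop :=
| HubHub : pair_edge Hub Hub
| HubCentre t : 0 < t <= n -> pair_edge Hub (Centre t)
| HubPendant c : c < s1 -> pair_edge Hub (Pendant c)
| CentreHub t : 0 < t <= n -> pair_edge (Centre t) Hub
| PendantHub c : c < s2 -> pair_edge (Pendant c) Hub
| LeafCentre t c : 0 < t <= n -> c < X t -> pair_edge (Leaf t c) (Centre t)
| CentreLeaf t c : 0 < t <= n -> c < Y t -> pair_edge (Centre t) (Leaf t c).

Lemma pair_edge_valid a b : pair_edge a b -> validA a /\ validB b.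
Proof. by case=> [|t|c|t|c|t c|t c] //= *; rewrite /validA /validB /= ?andbT; split => //; apply/andP. Qed.

(* The offset posB b - posA a of an edge is named by a slot: (true, k) stands
   for - posA k and (false, k) for posB k.  A leaf edge at branch t is sent to
   a leaf of branch 2t, or of branch 2(n - t) + 1 of the other side; balance
   guarantees that the leaf exists and that the offsets agree. *)
Definition offset_code (a b : slot) : bool * slot :=
  match a, b with
  | Hub, k => (false, k)
  | Centre t, Hub => (true, Centre t)
  | Pendant c, Hub => (true, Pendant c)
  | Leaf t c, _ => if t.*2 <= n then (true, Leaf t.*2 c)
                   else (false, Leaf (n - t).*2.+1 (X t - c.+1))
  | Centre t, Leaf _ c => if t.*2 <= n then (false, Leaf t.*2 c)
                          else (true, Leaf (n - t).*2.+1 (Y t - c.+1))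
  | _, _ => (false, Hub)
  end.

Definition offset_code_spec a b :=
  let: (neg, k) := offset_code a b in
  if neg then [/\ validA k, k <> Hub & posB b + posA k = posA a]
  else validB k /\ posB b = posA a + posB k.

Lemma offset_codeP a b : pair_edge a b -> offset_code_spec a b.
Proof.
rewrite /offset_code_spec; case=> [|t Ht|c Hc|t Ht|c Hc|t c Ht Hc|t c Ht Hc] //=.
- case: (leqP t.*2 n) => Ht2 /=.
  + have [E _] := balanced_even bal (t := t) ltac:(lia).
    split=> //; first by rewrite /= E; apply/andP; split => //; lia.
    by rewrite /posA /posB /= (tail_double bal Ht2); lia.
  + have [_ E] := balanced_odd bal (t := n - t) ltac:(lia).
    rewrite (_ : n - (n - t) = t) in E; last lia.
    split; first by rewrite /= E; apply/andP; split => //; lia.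
    rewrite /posA /posB /= (_ : n.+1 - t = (n - t).+1); last lia.
    have := tail_double_odd bal (u := n - t) ltac:(lia).
    rewrite (_ : n - (n - t) = t); last lia.
    by have := @tail_step n X t ltac:(lia); rewrite -addn2 -addnn; lia.
- case: (leqP t.*2 n) => Ht2 /=.
  + have [_ E] := balanced_even bal (t := t) ltac:(lia).
    split; first by rewrite /= E; apply/andP; split => //; lia.
    by rewrite /posA /posB /= (tail_double (balanced_sym bal) Ht2); lia.
  + have [E _] := balanced_odd bal (t := n - t) ltac:(lia).
    rewrite (_ : n - (n - t) = t) in E; last lia.
    split=> //; first by rewrite /= E; apply/andP; split => //; lia.
    rewrite /posA /posB /= (_ : n.+1 - t = (n - t).+1); last lia.
    have := tail_double_odd (balanced_sym bal) (u := n - t) ltac:(lia).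
    rewrite (_ : n - (n - t) = t); last lia.
    by have := @tail_step n Y t ltac:(lia); rewrite -addn2 -addnn; lia.
Qed.

Lemma offset_code_inj a b a' b' : pair_edge a b -> pair_edge a' b' ->
  offset_code a b = offset_code a' b' -> a = a' /\ b = b'.
Proof.
case=> [|t Ht|c Hc|t Ht|c Hc|t c Ht Hc|t c Ht Hc];
case=> [|t' Ht'|c' Hc'|t' Ht'|c' Hc'|t' c' Ht' Hc'|t' c' Ht' Hc'] /=;
  repeat case: ifP => ?; move=> // [] *; subst => //; try lia.
all: have ? : t = t' by lia.
all: by subst; split => //; congr Leaf; lia.
Qed.

Lemma pair_edge_offset_inj a b a' b' : pair_edge a b -> pair_edge a' b' ->
  posB b + posA a' = posB b' + posA a -> a = a' /\ b = b'.
Proof.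
move=> E E' D; apply: (offset_code_inj E E').
have := offset_codeP E; have := offset_codeP E'; rewrite /offset_code_spec.
case: (offset_code a b) => [[] k]; case: (offset_code a' b') => [[] k'].
- move=> [V' _ E'k] [V _ Ek]; congr pair; apply: (slot_pos_inj V V').
  by rewrite -/posA; lia.
- by move=> [V' E'k] [V N Ek]; have := slot_pos_gt0 V N; rewrite -/posA; lia.
- by move=> [V' N' E'k] [V Ek]; have := slot_pos_gt0 V' N'; rewrite -/posA; lia.
- move=> [V' E'k] [V Ek]; congr pair; apply: (slot_pos_inj V V').
  by rewrite -/posB; lia.
Qed.
End PairTree.

Lemma sum_prefix_search (F : nat -> nat) q l : l < \sum_(0 <= i < q) F i ->
  exists2 i, i < q & \sum_(0 <= j < i) F j <= l < \sum_(0 <= j < i) F j + F i.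
Proof.
elim: q => [|q IH]; first by rewrite big_geq.
rewrite big_nat_recr //= => Hl; case: (ltnP l (\sum_(0 <= i < q) F i)) => Hq.
  by have [i Hi Hl'] := IH Hq; exists i => //; lia.
by exists q => //; lia.
Qed.

Section Assembly.
Variables (q : nat) (n : nat -> nat) (X Y : nat -> nat -> nat) (s1 s2 : nat -> nat).
Hypothesis bal : forall J, J < q -> balanced (n J) (X J) (Y J).

Definition sizeA J := side_size (n J) (X J) (s2 J).
Definition sizeB J := side_size (n J) (Y J) (s1 J).
Definition startA J := \sum_(0 <= i < J) sizeA i.
Definition totalA := startA q.
Definition totalB := \sum_(0 <= i < q) sizeB i.
Definition startB J := \sum_(J.+1 <= i < q) sizeB i.
Definition link_diff J := \sum_(J.+1 <= i < q) (sizeA i + sizeB i).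

(* A vertex is coded by its pair J, its colour class (true for the class of
   v_{2J}) and its slot there.  The A classes of the pairs 0, ..., q - 1 take
   the labels below totalA in this order, the B classes follow in the reverse
   order; then the edge v_{2J+1} v_{2J+2} has difference link_diff J and the
   edges of pair J fill the differences just above it. *)
Definition code := (nat * bool * slot)%type.

Definition code_valid (x : code) : bool :=
  let: (J, inA, k) := x in
  (J < q) && (if inA then slot_valid (n J) (X J) (s2 J) k else slot_valid (n J) (Y J) (s1 J) k).

Definition code_label (x : code) : nat :=
  let: (J, inA, k) := x in
  if inA then startA J + slot_pos (n J) (X J) k
  else totalA + startB J + slot_pos (n J) (Y J) k.

Inductive code_edge : code -> code -> Prop :=
| InPair J a b : J < q -> pair_edge (n J) (X J) (Y J) (s1 J) (s2 J) a b ->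
    code_edge (J, true, a) (J, false, b)
| Link J : J.+1 < q -> code_edge (J.+1, true, Hub) (J, false, Hub).

Lemma sizeA_gt0 J : 0 < sizeA J.
Proof. by rewrite /sizeA /side_size addSn. Qed.

Lemma startA_S J : startA J.+1 = startA J + sizeA J.
Proof. by rewrite /startA big_nat_recr. Qed.

Lemma startA_mono J J' : J < J' -> startA J + sizeA J <= startA J'.
Proof. by move=> lt; rewrite -startA_S /startA (big_cat_nat (leq0n J.+1) lt) //= leq_addr. Qed.

Lemma totalB_split J : J < q -> totalB = \sum_(0 <= i < J) sizeB i + sizeB J + startB J.
Proof. by move=> HJ; rewrite /totalB (big_cat_nat (leq0n J) (ltnW HJ)) /= (big_ltn HJ) addnA. Qed.

Lemma startB_mono J J' : J < J' -> J' < q -> startB J' + sizeB J' <= startB J.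
Proof.
move=> lt lt'; rewrite /startB (big_cat_nat lt (ltnW lt')) (big_ltn lt') /=; lia.
Qed.

Lemma startB_link_diff J : J < q -> totalA + startB J = startA J + sizeA J + link_diff J.
Proof.
move=> HJ; have -> : link_diff J = \sum_(J.+1 <= i < q) sizeA i + startB J.
  by rewrite /link_diff big_split.
by rewrite /totalA /startA (big_cat_nat (leq0n J) (ltnW HJ)) (big_ltn HJ) /=; lia.
Qed.

Lemma link_diff_S J : J.+1 < q -> link_diff J = link_diff J.+1 + sizeA J.+1 + sizeB J.+1.
Proof. by move=> HJ; rewrite /link_diff big_ltn //=; lia. Qed.

Lemma link_diff_lt J J' : J < J' -> J' < q -> link_diff J' + sizeA J' + sizeB J' <= link_diff J.
Proof.
elim: J' => [//|J' IH] lt lt'; rewrite -link_diff_S //.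
by case: (ltngtP J J') => [/IH /(_ (ltnW lt')) | //| ->]; lia.
Qed.

Lemma code_label_A J k : code_valid (J, true, k) -> code_label (J, true, k) < totalA.
Proof.
move=> /andP [HJ Hk] /=; have := slot_pos_lt Hk; have := startA_mono HJ.
by rewrite /totalA -/(sizeA J); lia.
Qed.

Lemma code_label_B J k : code_valid (J, false, k) ->
  totalA <= code_label (J, false, k) < totalA + totalB.
Proof.
move=> /andP [HJ Hk] /=; have := slot_pos_lt Hk; have := totalB_split HJ.
by rewrite -/(sizeB J); lia.
Qed.

Lemma code_label_lt x : code_valid x -> code_label x < totalA + totalB.
Proof.
case: x => [[J []] k] Hx; first by have := code_label_A Hx; lia.
by have := code_label_B Hx; lia.
Qed.

Lemma code_label_inj x y : code_valid x -> code_valid y -> code_label x = code_label y -> x = y.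
Proof.
case: x => [[J []] k]; case: y => [[J' []] k'] Hx Hy E.
- move: Hx Hy E => /andP [HJ Hk] /andP [HJ' Hk'] /=.
  have := slot_pos_lt Hk; have := slot_pos_lt Hk'; rewrite -!/(sizeA _).
  case: (ltngtP J J') => [lt | lt | eJ] ? ?; try by have := startA_mono lt; lia.
  by subst J' => E; rewrite (slot_pos_inj Hk Hk' (addnI E)).
- by have := code_label_A Hx; have := code_label_B Hy; lia.
- by have := code_label_A Hy; have := code_label_B Hx; lia.
- move: Hx Hy E => /andP [HJ Hk] /andP [HJ' Hk'] /=.
  have := slot_pos_lt Hk; have := slot_pos_lt Hk'; rewrite -!/(sizeB _).
  case: (ltngtP J J') => [lt | lt | eJ] ? ?.
  + by have := startB_mono lt HJ'; lia.
  + by have := startB_mono lt HJ; lia.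
  + by subst J' => E; rewrite (slot_pos_inj Hk Hk' (addnI E)).
Qed.

Lemma code_label_surj l : l < totalA + totalB -> exists2 x, code_valid x & code_label x = l.
Proof.
move=> Hl; case: (ltnP l totalA) => HA.
  have [J HJ] := sum_prefix_search HA; rewrite -/(startA J) => /andP [lo hi].
  have [k Hk Ek] := @slot_pos_surj (n J) (X J) (s2 J) (l - startA J) ltac:(rewrite -/(sizeA J); lia).
  by exists (J, true, k); rewrite /= ?HJ ?Hk //; lia.
have HB : totalB - (l - totalA).+1 < totalB by lia.
have [J HJ /andP [lo hi]] := sum_prefix_search HB.
have := totalB_split HJ; rewrite -/totalB => split.
have [k Hk Ek] := @slot_pos_surj (n J) (Y J) (s1 J) (l - totalA - startB J) ltac:(rewrite -/(sizeB J); lia).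
by exists (J, false, k); rewrite /= ?HJ ?Hk //; lia.
Qed.

Lemma code_edge_valid x y : code_edge x y -> code_valid x /\ code_valid y.
Proof.
case=> [J a b HJ E|J HJ] /=; last by rewrite !andbT; split; lia.
by have [Va Vb] := pair_edge_valid E; rewrite HJ.
Qed.

Lemma code_edge_sides x y : code_edge x y -> code_label x < totalA <= code_label y.
Proof.
move=> G; have [Vx Vy] := code_edge_valid G.
case: G Vx Vy => [J a b _ _|J _] Vx Vy; have := code_label_A Vx; have := code_label_B Vy; lia.
Qed.

Lemma in_pair_diff J a b : J < q -> pair_edge (n J) (X J) (Y J) (s1 J) (s2 J) a b ->
  code_label (J, false, b) + posA (n J) (X J) a
  = code_label (J, true, a) + link_diff J + sizeA J + posB (n J) (Y J) b.
Proof. by move=> HJ _; rewrite /= (startB_link_diff HJ) /posA /posB; lia. Qed.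

Lemma link_label J : J.+1 < q ->
  code_label (J, false, Hub) = code_label (J.+1, true, Hub) + link_diff J.
Proof. by move=> HJ; rewrite /= (startB_link_diff (ltnW HJ)) startA_S; lia. Qed.

Lemma code_edge_band x y : code_edge x y ->
  let J := y.1.1 in
  [/\ J < q, code_label x + link_diff J <= code_label y
     & code_label y < code_label x + link_diff J + sizeA J + sizeB J].
Proof.
case=> [J a b HJ E|J HJ] /=; last first.
  by have /= := link_label HJ; have := sizeA_gt0 J; split; lia.
have [Va Vb] := pair_edge_valid E; have /= := in_pair_diff HJ E.
by have := slot_pos_lt Va; have := slot_pos_lt Vb; rewrite /posA /posB /sizeA /sizeB; split; lia.
Qed.

Lemma code_edge_diff_inj x y x' y' : code_edge x y -> code_edge x' y' ->
  code_label y + code_label x' = code_label y' + code_label x -> x = x' /\ y = y'.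
Proof.
move=> G G' D; have same_pair : y.1.1 = y'.1.1.
  have [HJ lo hi] := code_edge_band G; have [HJ' lo' hi'] := code_edge_band G'.
  case: (ltngtP y.1.1 y'.1.1) => [lt|lt|//].
  - by have := link_diff_lt lt HJ'; lia.
  - by have := link_diff_lt lt HJ; lia.
case: G G' D same_pair => [J a b HJ E|J HJ] [J' a' b' HJ' E'|J' HJ'] /= D EJ; subst J' => //.
- suff [-> ->] : a = a' /\ b = b' by [].
  apply: (pair_edge_offset_inj (bal HJ) E E').
  by have /= := in_pair_diff HJ E; have /= := in_pair_diff HJ E'; rewrite /posA /posB; lia.
- have [Va _] := pair_edge_valid E.
  by have := slot_pos_lt Va; have := startA_S J; rewrite /sizeA; lia.
- have [Va _] := pair_edge_valid E'.
  by have := slot_pos_lt Va; have := startA_S J; rewrite /sizeA; lia.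
Qed.
End Assembly.

Lemma nedges_rooted (T : finType) (e : rel T) (root : T) (parent : T -> T) (depth : T -> nat) :
  irreflexive e -> parent root = root ->
  (forall x, x != root -> e x (parent x) /\ depth (parent x) < depth x) ->
  (forall x y, e x y -> y = parent x \/ x = parent y) ->
  nedges e = #|T|.-1.
Proof.
move=> irr_e root_fix parentP edge_parent; rewrite /nedges.
have -> : edges e = [set [set x; parent x] | x in [set~ root]].
  apply/setP => S; apply/imsetP/imsetP => [[p] | [x]].
  - rewrite inE => Hp ->; case: (edge_parent _ _ Hp) => E.
      exists p.1; last by rewrite E.
      by rewrite !inE; apply: contraTneq Hp => E0; rewrite E E0 root_fix irr_e.
    exists p.2; first by rewrite !inE; apply: contraTneq Hp => E0; rewrite E E0 root_fix irr_e.
    by rewrite E setUC.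
  - rewrite !inE => Hx ->; exists (x, parent x) => //.
    by rewrite inE; exact: (parentP x Hx).1.
rewrite card_in_imset ?cardsC1 // => x y; rewrite !inE => Hx Hy E.
have : x \in [set y; parent y] by rewrite -E set21.
rewrite in_set2 => /orP [/eqP //| /eqP Ex].
have : y \in [set x; parent x] by rewrite E set21.
rewrite in_set2 => /orP [/eqP -> //| /eqP Ey].
by have := (parentP x Hx).2; have := (parentP y Hy).2; rewrite -Ex -Ey; lia.
Qed.

Lemma card_bij_iota (T : finType) (f : T -> nat) N : injective f -> (forall x, f x < N) ->
  (forall l, l < N -> exists x, f x = l) -> #|T| = N.
Proof.
move=> f_inj f_lt f_surj; apply/eqP; rewrite eqn_leq; apply/andP; split.
  have := leq_card (fun x => Ordinal (f_lt x)); rewrite card_ord; apply.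
  by move=> x y [] /f_inj.
case: (posnP N) => [-> // | N_gt0]; have [x0 _] := f_surj 0 N_gt0.
pose g (i : 'I_N) := odflt x0 [pick x | f x == i].
have gK i : f (g i) = i.
  rewrite /g; case: pickP => [x /eqP // | none].
  by have [x Ex] := f_surj i (ltn_ord i); have := none x; rewrite Ex eqxx.
have := @leq_card _ _ g; rewrite card_ord; apply.
by move=> i j E; apply: val_inj; rewrite /= -(gK i) -(gK j) E.
Qed.

(* [balanced_pair r sp par w1 w2] unfolds to
   [exists xs ys, balanced_indexing r sp par w1 w2 xs ys]. *)
Definition balanced_indexing (T : finType) (r : nat) (sp : nat -> T) (par : T -> T)
    (w1 w2 : T) (xs ys : seq T) : Prop :=
  uniq xs /\ uniq ys /\
  (forall u, (u \in xs) = is_branch r sp par w1 u) /\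
  (forall u, (u \in ys) = is_branch r sp par w2 u) /\
  size xs = size ys /\
  (let n := size xs in
   let X := fun i => nleaves r sp par (nth w1 xs i.-1) in
   let Y := fun i => nleaves r sp par (nth w2 ys i.-1) in
   forall i, 1 <= i <= n ->
     if odd i then X i = Y (n - (i.-1)./2) /\ Y i = X (n - (i.-1)./2)
     else X i = X (i./2) /\ Y i = Y (i./2)).

Lemma half_pred_odd i : odd i -> (i.-1)./2 = i./2.
Proof. by case: i => //= i even_i; rewrite uphalf_half (negbTE even_i). Qed.

Lemma balanced_indexing_balanced (T : finType) r sp par (w1 w2 : T) xs ys :
  balanced_indexing r sp par w1 w2 xs ys ->
  balanced (size xs) (fun t => nleaves r sp par (nth w1 xs t.-1))
                     (fun t => nleaves r sp par (nth w2 ys t.-1)).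
Proof.
move=> [_ [_ [_ [_ [_ bal]]]]] i /bal; case: ifP => // odd_i.
by rewrite half_pred_odd.
Qed.

Lemma odd_bit_double (b : bool) J : odd (b + J.*2) = b.
Proof. by rewrite oddD odd_double addbF oddb. Qed.

Section Lobster.
Variables (T : finType) (e : rel T) (r : nat) (sp : nat -> T) (par : T -> T).
Hypothesis lob : lobster_description e r sp par.
Hypothesis even_r : ~~ odd r.
Variables (xs ys : nat -> seq T).
Hypothesis xs_ys_balanced : forall J, J < r./2 ->
  balanced_indexing r sp par (sp J.*2) (sp J.*2.+1) (xs J) (ys J).

Definition npairs := r./2.
Definition on_spine x := is_spine r sp x.
Definition spine_index x := if [pick i : 'I_r | sp i == x] is Some i then val i else 0.
Definition leaves_of u := [set z | ~~ on_spine z & par z == u].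
Definition pendants_of w := [set z | [&& ~~ on_spine z, par z == w & nleaves r sp par z == 0]].
Definition set_index (S : {set T}) x := index x (enum S).
Definition branches (b : bool) J := if b then ys J else xs J.

Definition nbranches J := size (xs J).
Definition xleaves J t := nleaves r sp par (nth (sp J.*2) (xs J) t.-1).
Definition yleaves J t := nleaves r sp par (nth (sp J.*2.+1) (ys J) t.-1).
Definition npendants1 J := #|pendants_of (sp J.*2)|.
Definition npendants2 J := #|pendants_of (sp J.*2.+1)|.

(* Spine vertex b + 2J (b = false, true) is v_{2J} or v_{2J+1} of pair J.
   Class A of pair J holds v_{2J}, the leaves of the branches at v_{2J}, and
   the branch centres and pendants at v_{2J+1}; class B is symmetric.  Branch
   centres are numbered from 1 along xs J, ys J. *)
Definition code_of (x : T) : code :=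
  if on_spine x then let i := spine_index x in (i./2, ~~ odd i, Hub)
  else if on_spine (par x) then
    let i := spine_index (par x) in
    if 0 < nleaves r sp par x then (i./2, odd i, Centre (index x (branches (odd i) i./2)).+1)
    else (i./2, odd i, Pendant (set_index (pendants_of (par x)) x))
  else
    let u := par x in let i := spine_index (par u) in
    (i./2, ~~ odd i, Leaf (index u (branches (odd i) i./2)).+1 (set_index (leaves_of u) x)).

Definition vertex_of (k : code) : T :=
  let: (J, inA, s) := k in
  match s with
  | Hub => sp (~~ inA + J.*2)
  | Centre t => nth (sp (inA + J.*2)) (branches inA J) t.-1
  | Pendant c => nth (sp (inA + J.*2)) (enum (pendants_of (sp (inA + J.*2)))) c
  | Leaf t c => let u := nth (sp (~~ inA + J.*2)) (branches (~~ inA) J) t.-1 in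
                nth (sp (~~ inA + J.*2)) (enum (leaves_of u)) c
  end.

Lemma r_gt0 : 0 < r. Proof. by case: lob. Qed.

Lemma sp_inj i j : i < r -> j < r -> sp i = sp j -> i = j.
Proof. by case: lob => _ [H _]; apply: H. Qed.

Lemma par_off_spine x : ~~ on_spine x ->
  on_spine (par x) \/ (~~ on_spine (par x) /\ on_spine (par (par x))).
Proof. by case: lob => _ [_ [H _]]; apply: H. Qed.

Lemma lobster_edge x y : e x y <->
  (exists i, i.+1 < r /\ ((x = sp i /\ y = sp i.+1) \/ (y = sp i /\ x = sp i.+1))) \/
  (~~ on_spine x /\ y = par x) \/ (~~ on_spine y /\ x = par y).
Proof. by case: lob => _ [_ [_ H]]; apply: H. Qed.

Lemma spine_indexP x : on_spine x -> spine_index x < r /\ sp (spine_index x) = x.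
Proof.
rewrite /on_spine /is_spine /spine_index => /existsP [i /eqP Hi].
case: pickP => [j /eqP Hj | none]; first by split; rewrite ?ltn_ord.
by move: (none i); rewrite Hi eqxx.
Qed.

Lemma on_spine_sp i : i < r -> on_spine (sp i).
Proof. by move=> H; apply/existsP; exists (Ordinal H). Qed.

Lemma spine_index_sp i : i < r -> spine_index (sp i) = i.
Proof. by move=> H; have [H1 H2] := spine_indexP (on_spine_sp H); apply: sp_inj. Qed.

Lemma r_double : r = npairs.*2.
Proof. by rewrite /npairs -{1}(odd_double_half r) (negbTE even_r). Qed.

Lemma pair_index_lt (b : bool) J : J < npairs -> b + J.*2 < r.
Proof. by rewrite r_double; case: b => /=; lia. Qed.

Lemma pair_index_split i : i < r -> exists (b : bool) J, i = b + J.*2 /\ J < npairs.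
Proof.
move=> H; exists (odd i), i./2; rewrite odd_double_half; split => //.
by move: H; rewrite r_double /npairs; have := odd_double_half i; case: (odd i) => /=; lia.
Qed.

Lemma branches_spec (b : bool) J : J < npairs -> uniq (branches b J) /\
  (forall u, (u \in branches b J) = is_branch r sp par (sp (b + J.*2)) u).
Proof. by move=> /xs_ys_balanced [U1 [U2 [M1 [M2 _]]]]; case: b. Qed.

Lemma size_branches (b : bool) J : J < npairs -> size (branches b J) = nbranches J.
Proof. by move=> /xs_ys_balanced [_ [_ [_ [_ [E _]]]]]; case: b. Qed.

Lemma set_index_lt (S : {set T}) x : x \in S -> set_index S x < #|S|.
Proof. by move=> H; rewrite /set_index cardE index_mem mem_enum. Qed.

Lemma nth_set_index (S : {set T}) x y : x \in S -> nth y (enum S) (set_index S x) = x.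
Proof. by move=> H; rewrite /set_index nth_index // mem_enum. Qed.

Lemma set_index_nth (S : {set T}) c y : c < #|S| -> set_index S (nth y (enum S) c) = c.
Proof. by move=> H; rewrite /set_index index_uniq // ?enum_uniq // -cardE. Qed.

Lemma nth_enum_in (S : {set T}) c y : c < #|S| -> nth y (enum S) c \in S.
Proof. by move=> H; rewrite -mem_enum mem_nth // -cardE. Qed.

Local Notation valid := (code_valid npairs nbranches xleaves yleaves npendants1 npendants2).

Lemma code_of_spine (b : bool) J : J < npairs -> code_of (sp (b + J.*2)) = (J, ~~ b, Hub).
Proof.
move=> HJ; rewrite /code_of on_spine_sp ?pair_index_lt // spine_index_sp ?pair_index_lt //.
by rewrite half_bit_double odd_bit_double.
Qed.

Lemma branch_facts (b : bool) J x : J < npairs -> x \in branches b J ->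
  [/\ ~~ on_spine x, par x = sp (b + J.*2) & 0 < nleaves r sp par x].
Proof.
move=> HJ; have [_ ->] := branches_spec b HJ.
by rewrite /is_branch => /and3P [? /eqP ? ?].
Qed.

Lemma code_of_centre (b : bool) J x : J < npairs -> x \in branches b J ->
  code_of x = (J, b, Centre (index x (branches b J)).+1).
Proof.
move=> HJ Hx; have [off par_x lvs] := branch_facts HJ Hx.
rewrite /code_of (negbTE off) par_x on_spine_sp ?pair_index_lt // spine_index_sp ?pair_index_lt //.
by rewrite lvs half_bit_double odd_bit_double.
Qed.

Lemma code_of_pendant (b : bool) J x : J < npairs -> x \in pendants_of (sp (b + J.*2)) ->
  code_of x = (J, b, Pendant (set_index (pendants_of (sp (b + J.*2))) x)).
Proof.
move=> HJ; rewrite inE => /and3P [off /eqP par_x /eqP lvs].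
rewrite /code_of (negbTE off) par_x on_spine_sp ?pair_index_lt // spine_index_sp ?pair_index_lt //.
by rewrite lvs half_bit_double odd_bit_double.
Qed.

Lemma code_of_leaf (b : bool) J u x : J < npairs -> u \in branches b J -> x \in leaves_of u ->
  code_of x = (J, ~~ b, Leaf (index u (branches b J)).+1 (set_index (leaves_of u) x)).
Proof.
move=> HJ Hu; have [off_u par_u _] := branch_facts HJ Hu.
rewrite inE => /andP [off /eqP par_x].
rewrite /code_of (negbTE off) par_x (negbTE off_u) par_u spine_index_sp ?pair_index_lt //.
by rewrite half_bit_double odd_bit_double.
Qed.

Variant vertex_kind (x : T) : Prop :=
| SpineVertex (b : bool) J of J < npairs & x = sp (b + J.*2)
| CentreVertex (b : bool) J of J < npairs & x \in branches b J
| PendantVertex (b : bool) J of J < npairs & x \in pendants_of (sp (b + J.*2))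
| LeafVertex (b : bool) J u of J < npairs & u \in branches b J & x \in leaves_of u.

Lemma vertexP x : vertex_kind x.
Proof.
case: (boolP (on_spine x)) => [on | off].
  have [lt E] := spine_indexP on; have [b [J [Ei HJ]]] := pair_index_split lt.
  by apply: (SpineVertex HJ); rewrite -E Ei.
case: (par_off_spine off) => [on | [off_p on]].
  have [lt E] := spine_indexP on; have [b [J [Ei HJ]]] := pair_index_split lt.
  case: (posnP (nleaves r sp par x)) => lvs.
    by apply: (PendantVertex (b := b) HJ); rewrite inE off lvs -Ei E eqxx.
  apply: (CentreVertex (b := b) HJ); have [_ ->] := branches_spec b HJ.
  by rewrite /is_branch off lvs -Ei E eqxx.
have [lt E] := spine_indexP on; have [b [J [Ei HJ]]] := pair_index_split lt.
have Hx : x \in leaves_of (par x) by rewrite inE off eqxx.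
apply: (LeafVertex (b := b) HJ _ Hx); have [_ ->] := branches_spec b HJ.
rewrite /is_branch off_p -Ei E eqxx /=.
by rewrite /nleaves (cardD1 x) -/(leaves_of (par x)) Hx.
Qed.

Lemma code_of_valid x : valid (code_of x).
Proof.
case: (vertexP x) => [b J HJ ->|b J HJ Hx|b J HJ Hx|b J u HJ Hu Hx].
- by rewrite code_of_spine //= HJ; case: b.
- rewrite (code_of_centre HJ Hx) /= HJ /=.
  have := size_branches b HJ; rewrite -index_mem in Hx.
  by case: b Hx => /= Hx <-; rewrite Hx.
- by rewrite (code_of_pendant HJ Hx) /= HJ /=; have := set_index_lt Hx; case: b Hx.
- rewrite (code_of_leaf HJ Hu Hx) /= HJ /=.
  have := size_branches b HJ; have Hu' := Hu; rewrite -index_mem in Hu'.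
  have lt := set_index_lt Hx.
  case: b Hu Hu' lt => /= Hu Hu' lt <-; rewrite Hu' /= ?/yleaves ?/xleaves /=;
    by rewrite (set_nth_default u) // nth_index.
Qed.

Lemma code_ofK : cancel code_of vertex_of.
Proof.
move=> x; case: (vertexP x) => [b J HJ ->|b J HJ Hx|b J HJ Hx|b J u HJ Hu Hx].
- by rewrite code_of_spine //= negbK.
- by rewrite (code_of_centre HJ Hx) /= nth_index.
- by rewrite (code_of_pendant HJ Hx) /= nth_set_index.
- by rewrite (code_of_leaf HJ Hu Hx) /= negbK nth_index // nth_set_index.
Qed.

Lemma vertex_ofK k : valid k -> code_of (vertex_of k) = k.
Proof.
case: k => [[J inA] s] /= /andP [HJ V].
case: s V => [|t|t c|c] /= V.
- by rewrite code_of_spine // negbK.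
- have Vt : 0 < t <= nbranches J by case: inA V.
  have Ht : t.-1 < size (branches inA J) by rewrite size_branches //; lia.
  rewrite (code_of_centre HJ (mem_nth _ Ht)) index_uniq //; last by case: (branches_spec inA HJ).
  by congr (_, _, Centre _); lia.
- have Vt : 0 < t <= nbranches J by case: inA V => /= /andP [].
  have Ht : t.-1 < size (branches (~~ inA) J) by rewrite size_branches //; lia.
  have Hu := mem_nth (sp (~~ inA + J.*2)) Ht.
  have Hc : c < #|leaves_of (nth (sp (~~ inA + J.*2)) (branches (~~ inA) J) t.-1)|.
    by case: inA V Ht Hu => /= /andP [_ V] Ht Hu; exact V.
  rewrite (code_of_leaf HJ Hu (nth_enum_in _ Hc)) negbK set_index_nth //.
  rewrite index_uniq //; last by case: (branches_spec (~~ inA) HJ).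
  by congr (_, _, Leaf _ _); lia.
- have Hc : c < #|pendants_of (sp (inA + J.*2))| by case: inA V.
  by rewrite (code_of_pendant HJ (nth_enum_in _ Hc)) set_index_nth.
Qed.

Local Notation cedge := (code_edge npairs nbranches xleaves yleaves npendants1 npendants2).

Lemma par_code_edge x : ~~ on_spine x ->
  cedge (code_of x) (code_of (par x)) \/ cedge (code_of (par x)) (code_of x).
Proof.
move=> off; have V := code_of_valid x.
case: (vertexP x) V => [b J HJ Ex|b J HJ Hx|b J HJ Hx|b J u HJ Hu Hx] V.
- by rewrite Ex on_spine_sp ?pair_index_lt in off.
- have [_ -> _] := branch_facts HJ Hx.
  rewrite code_of_spine // (code_of_centre HJ Hx) in V *; move: V => /= /andP [_ V].
  by clear Hx; case: b V => V; [left | right]; apply: InPair => //; [apply: CentreHub | apply: HubCentre].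
- move: (Hx); rewrite inE => /and3P [_ /eqP -> _].
  rewrite code_of_spine // (code_of_pendant HJ Hx) in V *; move: V => /= /andP [_ V].
  by clear Hx; case: b V => V; [left | right]; apply: InPair => //; [apply: PendantHub | apply: HubPendant].
- move: (Hx); rewrite inE => /andP [_ /eqP ->].
  rewrite (code_of_centre HJ Hu) (code_of_leaf HJ Hu Hx) in V *.
  case: b Hu V => Hu /= /andP [_ /andP [V1 V2]]; [right | left]; apply: InPair => //.
  + by apply: CentreLeaf.
  + by apply: LeafCentre.
Qed.

Lemma spine_code_edge i : i.+1 < r ->
  cedge (code_of (sp i)) (code_of (sp i.+1)) \/ cedge (code_of (sp i.+1)) (code_of (sp i)).
Proof.
move=> lt; have [b [J [Ei HJ]]] := pair_index_split (ltnW lt); subst i.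
case: b lt => lt.
- have HJ1 : J.+1 < npairs by move: lt; rewrite r_double /=; lia.
  right; rewrite -[(true + J.*2).+1]/(false + (J.+1).*2).
  by rewrite (code_of_spine true HJ) (code_of_spine false HJ1); apply: Link.
- left; rewrite -[(false + J.*2).+1]/(true + J.*2).
  by rewrite (code_of_spine true HJ) (code_of_spine false HJ); apply: InPair => //; apply: HubHub.
Qed.

Lemma lobster_code_edge x y : e x y ->
  cedge (code_of x) (code_of y) \/ cedge (code_of y) (code_of x).
Proof.
move/lobster_edge => [[i [lt [[-> ->]|[-> ->]]]]|[[off ->]|[off ->]]].
- exact: spine_code_edge.
- by case: (spine_code_edge lt) => ?; [right | left].
- exact: par_code_edge.
- by case: (par_code_edge off) => ?; [right | left].
Qed.

Definition parent x := if on_spine x then sp (spine_index x).-1 else par x.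
Definition depth x := if on_spine x then spine_index x else if on_spine (par x) then r else r.+1.

Lemma parent_edge x : x != sp 0 -> e x (parent x) /\ depth (parent x) < depth x.
Proof.
move=> ne; rewrite /parent /depth; case: (boolP (on_spine x)) => on.
  have [lt E] := spine_indexP on.
  have i_gt0 : spine_index x != 0 by apply: contraNneq ne => E0; rewrite -E E0.
  split.
    apply/lobster_edge; left; exists (spine_index x).-1; split; first lia.
    by right; split => //; rewrite prednK ?lt0n.
  by rewrite on_spine_sp ?spine_index_sp; lia.
split; first by apply/lobster_edge; right; left.
case: (par_off_spine on) => [on_p | [off_p on_pp]].
  by rewrite on_p; have [lt _] := spine_indexP on_p.
by rewrite (negbTE off_p) on_pp.
Qed.

Lemma edge_parent x y : e x y -> y = parent x \/ x = parent y.
Proof.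
move/lobster_edge => [[i [lt [[-> ->]|[-> ->]]]]|[[off ->]|[off ->]]].
- by right; rewrite /parent on_spine_sp // spine_index_sp.
- by left; rewrite /parent on_spine_sp // spine_index_sp.
- by left; rewrite /parent (negbTE off).
- by right; rewrite /parent (negbTE off).
Qed.

Lemma parent_sp0 : parent (sp 0) = sp 0.
Proof. by rewrite /parent on_spine_sp ?r_gt0 // spine_index_sp ?r_gt0. Qed.

Hypothesis irr_e : irreflexive e.

Lemma nedges_lobster : nedges e = #|T|.-1.
Proof. exact: nedges_rooted irr_e parent_sp0 parent_edge edge_parent. Qed.

Lemma lobster_pairs_balanced J : J < npairs -> balanced (nbranches J) (xleaves J) (yleaves J).
Proof. by move=> /xs_ys_balanced /balanced_indexing_balanced. Qed.

Definition label x := code_label npairs nbranches xleaves yleaves npendants1 npendants2 (code_of x).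
Definition critical := (totalA npairs nbranches xleaves npendants2).-1.
Definition nlabels :=
  totalA npairs nbranches xleaves npendants2 + totalB npairs nbranches yleaves npendants1.

Lemma label_inj : injective label.
Proof. by move=> x y /(code_label_inj (code_of_valid x) (code_of_valid y)) /(can_inj code_ofK). Qed.

Lemma label_lt x : label x < nlabels.
Proof. exact: code_label_lt (code_of_valid x). Qed.

Lemma label_surj l : l < nlabels -> exists x, label x = l.
Proof. by move=> /code_label_surj [k Vk <-]; exists (vertex_of k); rewrite /label vertex_ofK. Qed.

Lemma label_sides u v : e u v ->
  (label u <= critical < label v) \/ (label v <= critical < label u).
Proof.
by move=> /lobster_code_edge [] /code_edge_sides S; rewrite /critical /label; [left | right]; lia.
Qed.

Lemma label_diff_inj u v u' v' : e u v -> e u' v' ->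
  absdiff (label u) (label v) = absdiff (label u') (label v') ->
  (u = u' /\ v = v') \/ (u = v' /\ v = u').
Proof.
have code_inj := can_inj code_ofK.
move=> E E'; rewrite /absdiff /label => D.
case: (lobster_code_edge E) => G; case: (lobster_code_edge E') => G';
  have := code_edge_sides G; have := code_edge_sides G' => S' S;
  have [/code_inj ? /code_inj ?] := code_edge_diff_inj lobster_pairs_balanced G G' ltac:(lia); by [left | right].
Qed.

Lemma lobster_complete_alpha_labeling : complete_alpha_labeling e label critical.
Proof.
have card_T : #|T| = nlabels := card_bij_iota label_inj label_lt label_surj.
have m_eq : nedges e = nlabels.-1 by rewrite nedges_lobster card_T.
have := label_lt (sp 0) => nlabels_gt0.
split; last by move=> l; rewrite m_eq => Hl; apply: label_surj; lia.
split; first exact: label_inj.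
split; first by move=> v; rewrite m_eq; have := label_lt v; lia.
split; [exact: label_diff_inj | exact: label_sides].
Qed.
End Lobster.

Theorem corollary4p12 (T : finType) (e : rel T) :
  symmetric e -> irreflexive e -> pairwise_balanced_lobster e ->
  exists (f : T -> nat) (k : nat), complete_alpha_labeling e f k.
Proof.
move=> _ irr_e [r [sp [par [lob [even_r bal]]]]].
have choose_indexing J : exists p : seq T * seq T,
    J < r./2 -> balanced_indexing r sp par (sp J.*2) (sp J.*2.+1) p.1 p.2.
  case: (ltnP J r./2) => HJ; last by exists ([::], [::]).
  have r_eq := r_double even_r.
  by have [xs [ys ?]] := bal J.*2 ltac:(rewrite r_eq /npairs; lia) (negbT (odd_double J)); exists (xs, ys).
have [p Hp] := functional_choice _ choose_indexing.
by do 2 eexists; exact: (lobster_complete_alpha_labeling lob even_r Hp irr_e).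
Qed.
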